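(* Let $\mathcal{A}=\{A_1,\dots,A_m\}$ be a bimodal collection of pairwise disjoint nonempty subsets of a finite abelian group $G$, with internal difference groups $H_1,\dots,H_m$, and suppose there are at least two indices $i$ with $|A_i|<|H_i|$. Then for any two distinct indices $i\neq j$ with $|A_i|<|H_i|$ and $|A_j|<|H_j|$, $H_i$ is not a subgroup of $H_j$ and $H_j$ is not a subgroup of $H_i$.
   Context: $G$ is written additively. The internal difference group $H_i$ of $A_i$ is the subgroup generated by all $x-y$ with $x,y\in A_i$; one always has $|A_i|\le|H_i|$. A collection $\{A_1,\dots,A_m\}$ of pairwise disjoint subsets of $G$ is bimodal if for every $i$ and every $\delta\in G\setminus\{0\}$, the number $N_i(\delta)$ of pairs $(a,b)$ with $a\in A_i$, $b\in A_j$ for some $j\neq i$, and $a-b=\delta$, satisfies $N_i(\delta)\in\{0,|A_i|\}$. *)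

From mathcomp Require Import all_boot all_order all_algebra.
Set Implicit Arguments. Unset Strict Implicit. Unset Printing Implicit Defensive.
Import GRing.Theory.
Local Open Scope ring_scope.

Definition is_subgroup (G : finZmodType) (S : {set G}) : bool :=
  (0 \in S) && [forall x in S, forall y in S, x - y \in S].

Definition gen_subgroup (G : finZmodType) (X : {set G}) : {set G} :=
  \bigcap_(S : {set G} | is_subgroup S && (X \subset S)) S.

Definition diff_set (G : finZmodType) (A : {set G}) : {set G} :=
  [set d | [exists x in A, exists y in A, d == x - y]].

Definition int_diff_group (G : finZmodType) (A : {set G}) : {set G} :=
  gen_subgroup (diff_set A).

Definition Ncount (G : finZmodType) (m : nat) (A : 'I_m -> {set G}) (i : 'I_m)
  (delta : G) : nat :=
  #|[set p : G * G | [&& p.1 \in A i,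
       [exists j : 'I_m, (j != i) && (p.2 \in A j)] & p.1 - p.2 == delta]]|.

Definition pairwise_disjoint (G : finZmodType) (m : nat) (A : 'I_m -> {set G}) : Prop :=
  forall i j : 'I_m, i != j -> [disjoint A i & A j].

Definition bimodal (G : finZmodType) (m : nat) (A : 'I_m -> {set G}) : Prop :=
  pairwise_disjoint A /\
  forall (i : 'I_m) (delta : G), delta != 0 ->
    Ncount A i delta = 0%N \/ Ncount A i delta = #|A i|.

(* For a bimodal collection, let B_i be the union of the blocks other than
   A_i.  Whenever a in A_i and b in B_i, the difference a - b is nonzero and
   N_i(a - b) is positive, so by bimodality every a' in A_i has a' - (a - b)
   in B_i: thus B_i is invariant under translation by every element of H_i.
   If H_i <= H_j, pick a in A_i; since |A_i| < |H_i| some a + h (h in H_i)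
   lies outside A_i.  As a lies in B_j, so does a + h, hence a + h lies in a
   block A_k with k <> i, i.e. in B_i; translating back by h puts a in B_i,
   contradicting disjointness. *)
From mathcomp Require Import all_boot all_order all_algebra.
Import GRing.Theory.
Set Implicit Arguments. Unset Strict Implicit.
Local Open Scope ring_scope.

Section Periods.

Variable G : finZmodType.

Lemma gen_subgroup_min (X S : {set G}) :
  is_subgroup S -> X \subset S -> gen_subgroup X \subset S.
Proof. by move=> sgS sXS; apply/subsetP => x /bigcapP; apply; rewrite sgS sXS. Qed.

Definition periods (B : {set G}) : {set G} :=
  [set h | [forall b, (b + h \in B) == (b \in B)]].

Lemma periodsP (B : {set G}) h :
  reflect (forall b, (b + h \in B) = (b \in B)) (h \in periods B).
Proof. by rewrite inE; apply: (iffP forallP) => hB b; apply/eqP. Qed.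

Lemma periods_subgroup (B : {set G}) : is_subgroup (periods B).
Proof.
apply/andP; split; first by apply/periodsP => b; rewrite addr0.
apply/forallP => x; apply/implyP => /periodsP xB.
apply/forallP => y; apply/implyP => /periodsP yB.
by apply/periodsP => b; rewrite -(yB (b + (x - y))) addrA subrK xB.
Qed.

Lemma int_diff_group_sub_periods (A B : {set G}) :
  (forall a a' b, a \in A -> a' \in A -> b \in B -> b + (a' - a) \in B) ->
  int_diff_group A \subset periods B.
Proof.
move=> shiftB; apply: gen_subgroup_min; first exact: periods_subgroup.
apply/subsetP => d; rewrite inE => /exists_inP [a Aa /exists_inP [a' Aa' /eqP ->]].
apply/periodsP => b; apply/idP/idP => [|Bb]; last exact: shiftB.
by move=> /(shiftB _ _ _ Aa Aa'); rewrite -[a' - a]opprB addrK.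
Qed.

Lemma exists_translate_notin (A S : {set G}) a :
  (#|A| < #|S|)%N -> exists2 h, h \in S & a + h \notin A.
Proof.
move=> ltAS; apply/exists_inP; rewrite -negb_forall_in; apply/negP.
move=> /forall_inP SA; move: ltAS; rewrite ltnNge.
have -> : #|S| = #|[set a + h | h in S]| by rewrite card_imset //; exact: addrI.
by rewrite subset_leq_card //; apply/subsetP => _ /imsetP [h Sh ->]; exact: SA.
Qed.

End Periods.

Section BimodalCollection.

Variables (G : finZmodType) (m : nat) (A : 'I_m -> {set G}).

Definition union_others (i : 'I_m) : {set G} :=
  [set x | [exists j, (j != i) && (x \in A j)]].

Lemma mem_union_others i j x : j != i -> x \in A j -> x \in union_others i.
Proof. by move=> ji Ajx; rewrite inE; apply/existsP; exists j; rewrite ji. Qed.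

Lemma notin_union_others i x :
  pairwise_disjoint A -> x \in A i -> x \notin union_others i.
Proof.
move=> disjA Aix; rewrite inE; apply/existsP => -[j /andP [ji Ajx]].
by move: (disjointFr (disjA _ _ ji) Ajx); rewrite Aix.
Qed.

Lemma Ncount_translates i delta :
  Ncount A i delta = #|[set a in A i | a - delta \in union_others i]|.
Proof.
rewrite /Ncount -(card_imset _ (f := fun a => (a, a - delta))); last by move=> x y [].
apply: eq_card => -[a b]; rewrite inE /=.
apply/and3P/imsetP => [[Aia Bb /eqP <-] | [a' /[!inE] /andP [Aia' Ba'] [-> ->]]].
  by exists a; rewrite ?inE opprB addrC subrK ?Aia.
by rewrite Aia' Ba' opprB addrC subrK eqxx.
Qed.

Lemma bimodal_shift i a a' b :
  bimodal A -> a \in A i -> a' \in A i -> b \in union_others i ->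
  b + (a' - a) \in union_others i.
Proof.
case=> disjA bimA Aia Aia' Bb.
have nz_ab : a - b != 0.
  by rewrite subr_eq0; apply: contraTneq Bb => <-; exact: notin_union_others.
set hit := [set x in A i | x - (a - b) \in union_others i].
have hit_a : a \in hit by rewrite inE Aia opprB addrC subrK.
have card_hit : #|hit| = #|A i|.
  have := bimA i _ nz_ab; rewrite Ncount_translates -/hit => -[/eqP | //].
  by rewrite cards_eq0 => /eqP hit0; rewrite hit0 inE in hit_a.
have hitE : hit =i A i by apply/(subset_cardP card_hit)/subsetP => x /setIdP [].
by move: (hitE a'); rewrite inE Aia' /= opprB addrCA.
Qed.

Lemma bimodal_int_diff_group_periods i :
  bimodal A -> int_diff_group (A i) \subset periods (union_others i).
Proof.
by move=> bimA; apply: int_diff_group_sub_periods => a a' b; exact: bimodal_shift.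
Qed.

Lemma bimodal_int_diff_group_not_sub i j :
  bimodal A -> A i != set0 -> i != j ->
  (#|A i| < #|int_diff_group (A i)|)%N ->
  ~~ (int_diff_group (A i) \subset int_diff_group (A j)).
Proof.
move=> bimA /set0Pn [a Aia] ij ltAH; apply/negP => sHij.
have [h Hih Aiah] := exists_translate_notin a ltAH.
have /periodsP perHi := subsetP (bimodal_int_diff_group_periods i bimA) _ Hih.
have /periodsP perHj :=
  subsetP (bimodal_int_diff_group_periods j bimA) _ (subsetP sHij _ Hih).
have : a + h \in union_others j by rewrite perHj (mem_union_others ij Aia).
rewrite inE => /existsP [k /andP [kj Akah]].
have ki : k != i by apply: contraNneq Aiah => <-.
have : a \in union_others i by rewrite -perHi (mem_union_others ki Akah).
by apply/negP; exact: notin_union_others bimA.1 Aia.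
Qed.

End BimodalCollection.

Theorem lemma3p3 (G : finZmodType) (m : nat) (A : 'I_m -> {set G}) :
  bimodal A ->
  (forall i : 'I_m, A i != set0) ->
  (exists i1 i2 : 'I_m, [/\ i1 != i2,
     (#|A i1| < #|int_diff_group (A i1)|)%N &
     (#|A i2| < #|int_diff_group (A i2)|)%N]) ->
  forall i j : 'I_m, i != j ->
    (#|A i| < #|int_diff_group (A i)|)%N ->
    (#|A j| < #|int_diff_group (A j)|)%N ->
    ~~ (int_diff_group (A i) \subset int_diff_group (A j)) /\
    ~~ (int_diff_group (A j) \subset int_diff_group (A i)).
Proof.
(* The existence of two such indices is witnessed by i and j themselves. *)
move=> bimA nonempty _ i j ij ltAHi ltAHj.
split; first exact: bimodal_int_diff_group_not_sub bimA (nonempty i) ij ltAHi.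
by rewrite eq_sym in ij; exact: bimodal_int_diff_group_not_sub bimA (nonempty j) ij ltAHj.
Qed.
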